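(* Let $\mathcal{K}$ be a connected simplicial complex and $d$ a path-dominated distance function on $\mathrm{vert}(\mathcal{K})$. Then for any two vertices $x,y$ there exists a path-dominated shortest path from $x$ to $y$.
   Context: A function $d:\mathrm{vert}(\mathcal{K})\times\mathrm{vert}(\mathcal{K})\to\mathbb{R}_{\ge0}$ is a path-dominated distance function if (i) $d(x,y)\ge0$ and $d(x,x)=0$ for all vertices, and (ii) for any vertices $x,y$ there is a path $\pi^*$ from $x$ to $y$ in the $1$-skeleton with $d(x,y)=\max_{u\in\mathrm{vert}(\pi^* )}d(x,u)$. A path $\langle u_0=x,u_1,\dots,u_k=y\rangle$ along edges of $\mathcal{K}$ is a path-dominated shortest path if $d(x,u_i)=\max_{j\le i}d(x,u_j)$ for each $i\in[1,k]$. *)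

From HB Require Import structures.
From mathcomp Require Import all_boot all_order all_algebra.
Set Implicit Arguments. Unset Strict Implicit. Unset Printing Implicit Defensive.
Import Order.TTheory GRing.Theory Num.Theory.
Local Open Scope ring_scope.

(* A (finite, abstract) simplicial complex on the vertex type V:
   a family K of nonempty faces, closed under taking nonempty subsets,
   whose vertex set vert(K) = {v | {v} \in K} is all of V. *)
Definition simplicial_complex (V : finType) (K : {set {set V}}) : Prop :=
  [/\ (forall s, s \in K -> s != set0),
      (forall s t : {set V}, s \in K -> t \subset s -> t != set0 -> t \in K)
    & (forall v : V, [set v] \in K)].

Definition skel_edge (V : finType) (K : {set {set V}}) : rel V :=
  fun u v => (u != v) && ([set u; v] \in K).

(* p is (the tail of) a path  x = u_0, u_1, ..., u_k = y  in the 1-skeleton;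
   its vertex list is x :: p. *)
Definition skel_path (V : finType) (K : {set {set V}}) (x y : V) (p : seq V) : bool :=
  path (skel_edge K) x p && (last x p == y).

Definition connected_complex (V : finType) (K : {set {set V}}) : Prop :=
  forall x y : V, exists p : seq V, skel_path K x y p.

(* maximum of d over a finite list of vertices (d takes values >= 0) *)
Definition dmax (R : realDomainType) (V : finType) (d : V -> V -> R) (x : V) (s : seq V) : R :=
  \big[Num.max/0]_(u <- s) d x u.

Definition path_dominated_distance (R : realDomainType) (V : finType)
  (K : {set {set V}}) (d : V -> V -> R) : Prop :=
  [/\ (forall x y, 0 <= d x y),
      (forall x, d x x = 0)
    & (forall x y, exists p : seq V, skel_path K x y p /\ d x y = dmax d x (x :: p))].

Definition pd_shortest_path (R : realDomainType) (V : finType)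
  (K : {set {set V}}) (d : V -> V -> R) (x y : V) (p : seq V) : Prop :=
  skel_path K x y p /\
  (forall i : nat, (0 < i <= size p)%N ->
     d x (nth x (x :: p) i) = dmax d x (take i.+1 (x :: p))).

From mathcomp Require Import all_boot all_order all_algebra.
Import Order.TTheory GRing.Theory Num.Theory.
Set Implicit Arguments. Unset Strict Implicit.

(* Call a path from x monotone if d x never decreases along it.  Every vertex
   y is the end of a monotone path, by strong induction on d x y: follow a
   path from x to y along which d x stays <= d x y; a vertex w with
   d x w < d x y has a monotone path by induction, and the current monotone
   path can be extended to a vertex w with d x w = d x y by one edge.  Along a
   monotone path the running maximum of d x is the current value, which is
   exactly the path-dominated shortest path condition. *)

Section MonotonePaths.

Local Open Scope order_scope.

Variables (disp : Order.disp_t) (R : orderType disp) (V : finType).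
Variables (e : rel V) (f : V -> R).

Lemma monotone_path_le_last a t :
  path (relpre f <=%O) a t -> {in a :: t, forall u, f u <= f (last a t)}.
Proof.
elim: t a => [|b t IH] a /=; first by move=> _ u; rewrite inE => /eqP->.
move=> /andP[le_ab mono_t] u /predU1P[->|u_t]; last exact: IH.
exact: le_trans le_ab (IH _ mono_t _ (mem_head _ _)).
Qed.

Lemma bigmax_monotone_path (x0 : R) a t :
  x0 <= f a -> path (relpre f <=%O) a t ->
  \big[Order.max/x0]_(u <- a :: t) f u = f (last a t).
Proof.
move=> le_x0a mono; have le_last := monotone_path_le_last mono.
apply/le_anti; rewrite le_bigmax_seq ?mem_last // andbT big_seq.
apply: bigmax_le => [|u /le_last //].
exact: le_trans le_x0a (le_last _ (mem_head _ _)).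
Qed.

Definition strict_sublevel y : {set V} := [set v | f v < f y].

Lemma ltn_card_strict_sublevel w y :
  f w < f y -> (#|strict_sublevel w| < #|strict_sublevel y|)%N.
Proof.
move=> lt_wy; apply/proper_card/properP; split.
  by apply/subsetP=> v; rewrite !inE => /lt_trans; apply.
by exists w; rewrite !inE ?lt_wy ?ltxx.
Qed.

Variable x : V.

Definition monotone_reachable (y : V) : Prop :=
  exists p, [&& path e x p, last x p == y & path (relpre f <=%O) x p].

Lemma monotone_reachable_step a w :
  monotone_reachable a -> e a w -> f a <= f w -> monotone_reachable w.
Proof.
move=> [p /and3P[e_p /eqP <- mono_p]] e_aw le_aw; exists (rcons p w).
by rewrite !rcons_path last_rcons e_p mono_p e_aw /= le_aw eqxx.
Qed.

Lemma monotone_reachable_along y a q :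
  (forall w, f w < f y -> monotone_reachable w) ->
  monotone_reachable a -> f a <= f y ->
  path e a q -> all (fun u => f u <= f y) q -> monotone_reachable (last a q).
Proof.
move=> below; elim: q a => [|w q IH] a //= reach_a le_ay /andP[e_aw e_q].
case/andP=> le_wy le_q; apply: IH => //.
case: (ltP (f w) (f y)) => [/below //|le_yw].
exact: monotone_reachable_step reach_a e_aw (le_trans le_ay le_yw).
Qed.

Hypothesis f_min : forall y, f x <= f y.
Hypothesis dominated_path : forall y,
  exists p, [&& path e x p, last x p == y & all (fun u => f u <= f y) p].

Lemma monotone_reachableT y : monotone_reachable y.
Proof.
move: {2}_.+1 (ltnSn #|strict_sublevel y|) => n.
elim: n y => [//|n IH] y lt_card.
have [p /and3P[e_p /eqP end_p dom_p]] := dominated_path y.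
rewrite -end_p; apply: (monotone_reachable_along (y := y)) => //.
- move=> w /ltn_card_strict_sublevel lt_wy; apply: IH.
  by apply: leq_trans lt_wy _; rewrite -ltnS.
- by exists [::]; rewrite /= eqxx.
Qed.

End MonotonePaths.

Local Open Scope ring_scope.

Theorem claim2 (R : realDomainType) (V : finType) (K : {set {set V}})
  (d : V -> V -> R) :
  simplicial_complex K -> connected_complex K -> path_dominated_distance K d ->
  forall x y : V, exists p : seq V, pd_shortest_path K d x y p.
Proof.
(* Path domination alone yields the paths. *)
move=> _ _ [d_ge0 d_xx d_dom] x y.
have dominated v : exists p,
    [&& path (skel_edge K) x p, last x p == v & all (fun u => d x u <= d x v) p].
  have [p [/andP[e_p end_p] ->]] := d_dom x v; exists p; rewrite e_p end_p.
  by apply/allP=> u p_u; rewrite /dmax le_bigmax_seq // inE p_u orbT.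
have [|p /and3P[e_p end_p mono_p]] := monotone_reachableT _ dominated y.
  by move=> v; rewrite d_xx d_ge0.
exists p; split=> [|i /andP[_ le_ip]]; first by rewrite /skel_path e_p end_p.
rewrite /dmax take_cons bigmax_monotone_path ?d_xx ?take_path //.
by rewrite (last_nth x) size_takel // -[x :: take _ _]/(take i.+1 (x :: p)) nth_take.
Qed.
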